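(* Let $\mu\in\mathbb{R}$, $\alpha>0$, $\lambda_1,\dots,\lambda_n,\lambda^*_1,\dots,\lambda^*_n>0$. Let $X_1,\dots,X_n$ be independent with $X_i\sim\mathrm{Fr\acute{e}}(\mu,\lambda_i,\alpha)$ and $X^*_1,\dots,X^*_n$ independent with $X^*_i\sim\mathrm{Fr\acute{e}}(\mu,\lambda^*_i,\alpha)$. Let $\boldsymbol{v}=(1/\lambda_1,\dots,1/\lambda_n)$ and $\boldsymbol{v}^*=(1/\lambda^*_1,\dots,1/\lambda^*_n)$. If $\sum_{i=1}^{j}v^*_{(i)}\ge\sum_{i=1}^{j}v_{(i)}$ for all $j=1,\dots,n$, then $X_{n:n}\ge_{\rm rh}X^*_{n:n}$.
   Context: $X\sim \mathrm{Fr\acute{e}}(\mu,\lambda,\alpha)$ means distribution function $\exp\{-((x-\mu)/\lambda)^{-\alpha}\}$ for $x>\mu$. $X_{n:n}=\max_i X_i$. $v_{(1)}\le\dots\le v_{(n)}$ are the components of $\boldsymbol{v}$ in increasing order. $X\le_{\rm rh}Y$ means the reversed hazard rate $F'/F$ of $X$ is pointwise $\le$ that of $Y$. *)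

From HB Require Import structures.
From mathcomp Require Import all_boot all_order all_algebra.
From mathcomp Require Import all_classical all_reals all_analysis.
Set Implicit Arguments. Unset Strict Implicit. Unset Printing Implicit Defensive.
Import Order.TTheory GRing.Theory Num.Theory.
Import numFieldNormedType.Exports.
Local Open Scope classical_set_scope.
Local Open Scope ring_scope.

Definition frechet_cdf (R : realType) (mu lam alpha : R) (x : R) : R :=
  if mu < x then expR (- (((x - mu) / lam) `^ (- alpha))) else 0.

(* Mutual independence of a finite family of real random variables:
   the product rule for every choice of Borel sets (taking B i = setT
   recovers every subfamily). *)
Definition mutually_independent (d : measure_display) (T : measurableType d)
  (R : realType) (P : probability T R) (n : nat) (X : 'I_n -> {RV P >-> R}) :=
  forall B : 'I_n -> set R, (forall i, measurable (B i)) ->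
    P (\bigcap_(i in [set: 'I_n]) (X i @^-1` B i)) =
    (\prod_(i < n) P (X i @^-1` B i))%E.

Definition max_stat (T : Type) (R : realType) (n : nat) (hn : (0 < n)%N)
  (X : 'I_n -> T -> R) (w : T) : R :=
  \big[Num.max/X (Ordinal hn) w]_(i < n) X i w.

Definition dist_fn (d : measure_display) (T : measurableType d) (R : realType)
  (P : probability T R) (Y : T -> R) (x : R) : R :=
  fine (P [set w | Y w <= x]).

Definition rev_hazard (R : realType) (F : R -> R) (x : R) : R :=
  (derive1 F x) / F x.

Definition sorted_incr (R : realType) (n : nat) (v : 'I_n -> R) : seq R :=
  sort <=%R [seq v i | i <- enum 'I_n].

Definition partial_sum_sorted (R : realType) (n : nat) (v : 'I_n -> R) (j : nat) : R :=
  \sum_(k < j) nth 0 (sorted_incr v) k.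

From HB Require Import structures.
From mathcomp Require Import all_boot all_order all_algebra.
From mathcomp Require Import all_classical all_reals all_analysis.
From mathcomp Require Import ring.
Import Order.TTheory GRing.Theory Num.Theory.
Import numFieldNormedType.Exports.
Local Open Scope classical_set_scope.
Local Open Scope ring_scope.

(* For x > mu the distribution function of X_{n:n} is exp(-S (x - mu)^(-alpha))
   with S = sum_i v_i^(-alpha), so its reversed hazard rate is
   S alpha (x - mu)^(-alpha-1), and everything reduces to showing that S does
   not increase when v is replaced by v^*.
   As t |-> t^(-alpha) is decreasing and convex on (0, oo), this follows from
   the weak supermajorization hypothesis: sum the tangent-line inequalities at
   the sorted v^*_(k) and control the first-order terms by Abel summation,
   the slopes being nonnegative and nonincreasing in k. *)

Section WeakSupermajorization.
Variable R : realType.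

Lemma size_sorted_incr {n} (v : 'I_n -> R) : size (sorted_incr v) = n.
Proof. by rewrite size_sort size_map size_enum_ord. Qed.

Lemma sum_sorted_incr {n} (v : 'I_n -> R) (f : R -> R) :
  \sum_(k < n) f (nth 0 (sorted_incr v) k) = \sum_i f (v i).
Proof.
transitivity (\sum_(0 <= k < size (sorted_incr v)) f (nth 0 (sorted_incr v) k)).
  by rewrite size_sorted_incr big_mkord.
rewrite -(big_nth 0 xpredT f) (perm_big _ (permEl (perm_sort _ _))).
by rewrite big_map big_enum.
Qed.

Lemma nth_sorted_incr {n} (v : 'I_n -> R) k :
  (k < n)%N -> exists i, nth 0 (sorted_incr v) k = v i.
Proof.
move=> kn; have : nth 0 (sorted_incr v) k \in sorted_incr v.
  by rewrite mem_nth ?size_sorted_incr.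
by rewrite mem_sort => /mapP[i _ ->]; exists i.
Qed.

Lemma nth_sorted_incr_le {n} (v : 'I_n -> R) k l : (k <= l < n)%N ->
  nth 0 (sorted_incr v) k <= nth 0 (sorted_incr v) l.
Proof.
move=> /andP[kl ln]; apply: (sorted_leq_nth le_trans lexx).
- exact/sort_sorted/le_total.
- by rewrite inE size_sorted_incr (leq_ltn_trans kl).
- by rewrite inE size_sorted_incr.
- exact: kl.
Qed.

Lemma abel_sum_ge0 {n} (a b c : nat -> R) :
  (forall k, (k < n)%N -> 0 <= c k) ->
  (forall k, (k.+1 < n)%N -> c k.+1 <= c k) ->
  (forall j, (1 <= j <= n)%N -> \sum_(k < j) a k <= \sum_(k < j) b k) ->
  0 <= \sum_(k < n) c k * (b k - a k).
Proof.
move=> c_ge0 c_noninc ab.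
pose D m := \sum_(k < m) (b k - a k).
have D_ge0 m : (m <= n)%N -> 0 <= D m.
  case: m => [|m] mn; first by rewrite /D big_ord0.
  by rewrite /D sumrB subr_ge0 ab.
(* Abel summation: step m adds c m * (D m.+1 - D m), and c m <= c m.-1. *)
suff summation m : (m <= n)%N -> c m.-1 * D m <= \sum_(k < m) c k * (b k - a k).
  case: n c_ge0 {c_noninc ab} D_ge0 summation => [|n] c_ge0 D_ge0 summation.
    by rewrite big_ord0.
  exact/(le_trans _ (summation _ (leqnn _)))/mulr_ge0/D_ge0/leqnn/c_ge0.
elim: m => [|m IHm] mn; first by rewrite /D big_ord0 mulr0 big_ord0.
have cm : c m <= c m.-1 by case: m {IHm} mn => [|m] mn //; apply: c_noninc.
rewrite /D !big_ord_recr /= -/(D m) mulrDr lerD2r.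
apply: le_trans (IHm (ltnW mn)).
exact/ler_wpM2r/cm/D_ge0/ltnW.
Qed.

Definition supmajorized {n} (x y : 'I_n -> R) :=
  forall j, (1 <= j <= n)%N -> partial_sum_sorted y j <= partial_sum_sorted x j.

Lemma supmajorized_sum_le (D : set R) (f c : R -> R) {n} (x y : 'I_n -> R) :
  (forall s t, D s -> D t -> f s + c s * (s - t) <= f t) ->
  (forall s, D s -> 0 <= c s) ->
  (forall s t, D s -> D t -> s <= t -> c t <= c s) ->
  (forall i, D (x i)) -> (forall i, D (y i)) ->
  supmajorized x y -> \sum_i f (x i) <= \sum_i f (y i).
Proof.
move=> tangent c_ge0 c_antitone Dx Dy xy.
pose a k := nth 0 (sorted_incr y) k; pose b k := nth 0 (sorted_incr x) k.
have Da k : (k < n)%N -> D (a k) by rewrite /a => /(nth_sorted_incr y)[i ->].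
have Db k : (k < n)%N -> D (b k) by rewrite /b => /(nth_sorted_incr x)[i ->].
rewrite -(sum_sorted_incr x) -(sum_sorted_incr y) -/a -/b.
have abel : 0 <= \sum_(k < n) c (b k) * (b k - a k).
  apply: (@abel_sum_ge0 n a b (c \o b)) => [k kn|k kn|]; first exact/c_ge0/Db.
    apply: c_antitone; [exact/Db/ltnW | exact: Db |].
    by rewrite nth_sorted_incr_le ?leqnSn.
  exact: xy.
apply: le_trans (ler_sum _ (fun k _ => tangent _ _ (Db _ (ltn_ord k)) (Da _ (ltn_ord k)))).
by rewrite big_split /= lerDl.
Qed.

Lemma powRN_tangent (al s t : R) : 0 <= al -> 0 < s -> 0 < t ->
  s `^ (- al) + al * s `^ (- al) / s * (s - t) <= t `^ (- al).
Proof.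
move=> al_ge0 s_gt0 t_gt0; have ts_gt0 : 0 < t / s by rewrite divr_gt0.
have -> : t `^ (- al) = s `^ (- al) * (t / s) `^ (- al).
  by rewrite -powRM ?ltW // mulrCA divff ?gt_eqF ?mulr1.
have -> : s `^ (- al) + al * s `^ (- al) / s * (s - t) =
          s `^ (- al) * (1 - al * (t / s - 1)).
  by field; rewrite gt_eqF.
(* (t/s)^(-al) = exp(-al ln(t/s)) >= 1 - al ln(t/s) >= 1 - al (t/s - 1) *)
rewrite ler_pM2l ?powR_gt0 // /powR gt_eqF //.
apply: le_trans (expR_ge1Dx _); rewrite mulNr lerD2l lerN2 ler_wpM2l //.
by have := @le_ln1Dx _ (t / s - 1); rewrite subrKC; apply; rewrite ltrBrDl subrr.
Qed.

Lemma supmajorized_sum_powRN_le (al : R) {n} (x y : 'I_n -> R) : 0 <= al ->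
  (forall i, 0 < x i) -> (forall i, 0 < y i) -> supmajorized x y ->
  \sum_i x i `^ (- al) <= \sum_i y i `^ (- al).
Proof.
move=> al_ge0 x_gt0 y_gt0.
apply: (@supmajorized_sum_le [set s | 0 < s] (fun s => s `^ (- al))
  (fun s => al * s `^ (- al) / s) n x y) => // [s t|s|s t] /= s_gt0.
- exact: powRN_tangent.
- by apply/divr_ge0/ltW/s_gt0/mulr_ge0/powR_ge0.
move=> t_gt0 st; rewrite -!mulrA ler_wpM2l // ler_pM ?powR_ge0 ?invr_ge0 ?(ltW t_gt0) //.
  rewrite !powRN lef_pV2 ?posrE ?powR_gt0 //.
  by apply: ge0_ler_powR => //; rewrite nnegrE ltW.
by rewrite lef_pV2.
Qed.

End WeakSupermajorization.

Section ReversedHazard.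
Variable R : realType.

Lemma rev_hazard_expR (F g : R -> R) (x dg : R) :
  (\forall y \near x, F y = expR (g y)) -> is_derive x 1 g dg ->
  rev_hazard F x = dg.
Proof.
move=> Fg gdg.
rewrite /rev_hazard derive1E (near_eq_derive _ Fg) (nbhs_singleton Fg).
have [_ ->] := is_derive1_comp (is_derive_expR (g x)) gdg.
by rewrite mulrAC divff ?mul1r // gt_eqF ?expR_gt0.
Qed.

Lemma is_derive_powRN_shift (mu alpha S x : R) : mu < x ->
  is_derive x 1 (fun y => - S * (y - mu) `^ (- alpha))
    (S * alpha * (x - mu) `^ (- alpha - 1)).
Proof.
move=> mu_x; have xmu_gt0 : 0 < x - mu by rewrite subr_gt0.
have dpow : is_derive x 1 ((fun u => u `^ (- alpha)) \o center mu)
    (- alpha * (x - mu) `^ (- alpha - 1) * 1).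
  by apply: is_derive1_comp; [exact: is_derive1_powR | exact: is_derive_shift].
apply: is_derive_eq (is_deriveZ (- S) dpow) _.
by rewrite [LHS]/GRing.scale /=; ring.
Qed.

Lemma prod_frechet_cdf {n} (mu alpha : R) (lam : 'I_n -> R) (y : R) :
  (forall i, 0 < lam i) -> mu < y ->
  \prod_i frechet_cdf mu (lam i) alpha y =
  expR (- (\sum_i (lam i)^-1 `^ (- alpha)) * (y - mu) `^ (- alpha)).
Proof.
move=> lam_gt0 mu_y.
rewrite mulNr mulr_suml -sumrN expR_sum; apply: eq_bigr => i _.
by rewrite /frechet_cdf mu_y mulrC -powRM ?invr_ge0 ?subr_ge0 ?ltW ?lam_gt0.
Qed.

Lemma rev_hazard_prod_frechet {n} (mu alpha : R) (lam : 'I_n -> R) (x : R) :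
  (forall i, 0 < lam i) -> mu < x ->
  rev_hazard (fun y => \prod_i frechet_cdf mu (lam i) alpha y) x =
  (\sum_i (lam i)^-1 `^ (- alpha)) * alpha * (x - mu) `^ (- alpha - 1).
Proof.
move=> lam_gt0 mu_x; set S := \sum_i _.
apply: rev_hazard_expR (is_derive_powRN_shift mu alpha S x mu_x).
by near=> y; apply: prod_frechet_cdf => //; near: y; exact: lt_nbhsr.
Unshelve. all: end_near.
Qed.

End ReversedHazard.

Section MaximumOrderStatistic.
Context {R : realType} {d : measure_display} {T : measurableType d}.
Context {P : probability T R} {n : nat} (hn : (0 < n)%N).
Context {X : 'I_n -> {RV P >-> R}} (X_indep : mutually_independent X).

Lemma prob_max_stat_le (y : R) :
  P [set w | max_stat hn (fun i => X i : T -> R) w <= y] =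
  (\prod_i P [set w | X i w <= y]%R)%E.
Proof.
have -> : [set w | max_stat hn (fun i => X i : T -> R) w <= y] =
          \bigcap_(i in [set: 'I_n]) (X i @^-1` `]-oo, y]).
  apply/seteqP; split => w /=.
  - move=> max_le i _; rewrite /= in_itv /=.
    by apply: le_trans max_le; exact: le_bigmax.
  - move=> X_le; apply: bigmax_le => [|i _].
      by have := X_le (Ordinal hn) I; rewrite /= in_itv.
    by have := X_le i I; rewrite /= in_itv.
rewrite X_indep => [|i]; last exact: measurable_itv.
by apply: eq_bigr => i _; congr (P _); apply/seteqP; split => w; rewrite /= in_itv.
Qed.

Lemma dist_fn_max_stat {F : 'I_n -> R -> R} :
  (forall i y, P [set w | X i w <= y] = (F i y)%:E) ->
  dist_fn P (max_stat hn (fun i => X i : T -> R)) = fun y => \prod_i F i y.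
Proof.
move=> X_cdf; apply/funext => y.
by rewrite /dist_fn prob_max_stat_le (eq_bigr _ (fun i _ => X_cdf i y)) prodEFin.
Qed.

End MaximumOrderStatistic.

Theorem mainTheorem9 (R : realType) (n : nat) (hn : (0 < n)%N)
  (mu alpha : R) (lam lams : 'I_n -> R)
  (d : measure_display) (T : measurableType d) (P : probability T R)
  (X : 'I_n -> {RV P >-> R})
  (ds : measure_display) (Ts : measurableType ds) (Ps : probability Ts R)
  (Xs : 'I_n -> {RV Ps >-> R}) :
  0 < alpha ->
  (forall i, 0 < lam i) -> (forall i, 0 < lams i) ->
  mutually_independent X ->
  (forall i x, P [set w | X i w <= x] = (frechet_cdf mu (lam i) alpha x)%:E) ->
  mutually_independent Xs ->
  (forall i x, Ps [set w | Xs i w <= x] = (frechet_cdf mu (lams i) alpha x)%:E) ->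
  (forall j : nat, (1 <= j <= n)%N ->
     partial_sum_sorted (fun i => (lams i)^-1) j >=
     partial_sum_sorted (fun i => (lam i)^-1) j) ->
  (* X_{n:n} >=_rh X*_{n:n}: r_{X*_{n:n}} <= r_{X_{n:n}} pointwise on the support (mu, oo) *)
  forall x : R, mu < x ->
    rev_hazard (dist_fn Ps (max_stat hn (fun i => Xs i : Ts -> R))) x <=
    rev_hazard (dist_fn P (max_stat hn (fun i => X i : T -> R))) x.
Proof.
move=> alpha_gt0 lam_gt0 lams_gt0 X_indep X_cdf Xs_indep Xs_cdf supmaj x mu_x.
rewrite (dist_fn_max_stat hn Xs_indep Xs_cdf) (dist_fn_max_stat hn X_indep X_cdf).
rewrite !rev_hazard_prod_frechet // ler_wpM2r ?powR_ge0 // ler_wpM2r ?(ltW alpha_gt0) //.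
apply: supmajorized_sum_powRN_le supmaj; first exact: ltW.
all: by move=> i; rewrite invr_gt0.
Qed.
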